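(* Let $X=\mathbb{CP}^2\#n\overline{\mathbb{CP}}^2$, $k$ a positive integer and $U_5=\{A\in H_2(X;\mathbb{Z}):\mathrm{ind}(A)\ge2k,\ A\cdot H>0\}$, equipped with the preorder $\ge$ defined below. Then every chain $A_1\ge A_2\ge\cdots$ in $U_5$ stabilizes, i.e. there is $N$ with $A_i=A_N$ for all $i\ge N$.
   Context: $K_0=-3H+E_1+\cdots+E_n$, $\mathrm{ind}(A):=A^2-K_0\cdot A$. Identify $H^2(X;\mathbb{R})$ with $\mathbb{R}^{n+1}$ by $(x_0,\dots,x_n)\leftrightarrow x_0PD(H)-\sum x_iPD(E_i)$. The reduced cone $\mathcal{P}$ is: $0<x_1<x_0$ if $n=1$; $0<x_2\le x_1$, $x_1+x_2<x_0$ if $n=2$; $0<x_n\le\cdots\le x_1$, $x_1+x_2+x_3\le x_0$, $\sum x_i^2<x_0^2$ if $n\ge3$. The $c_1$-nef cone is $\mathcal{P}^{c_1>0}=\{[\omega]\in\mathcal{P}:\omega(3H-E_1-\cdots-E_n)>0\}$. For $A,B\in U_5$, $A\ge B$ means $\omega(A)\ge\omega(B)$ for all $[\omega]\in\mathcal{P}^{c_1>0}$. *)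

From HB Require Import structures.
From mathcomp Require Import all_boot all_order all_algebra.
From mathcomp Require Import reals.
Set Implicit Arguments. Unset Strict Implicit. Unset Printing Implicit Defensive.
Import Order.TTheory GRing.Theory Num.Theory.
Local Open Scope ring_scope.

(* X = CP^2 # n \bar{CP^2}.  A class A = a H - sum_i b_i E_i in H_2(X;Z)
   is encoded by the pair (a, b) with b : {ffun 'I_n -> int}
   (index i : 'I_n corresponds to E_{i+1}). *)
Definition cls (n : nat) := (int * {ffun 'I_n -> int})%type.

(* intersection form: H.H = 1, E_i.E_i = -1, H.E_i = 0 *)
Definition dot n (A B : cls n) : int :=
  A.1 * B.1 - \sum_(i < n) A.2 i * B.2 i.

Definition clsH n : cls n := (1, [ffun _ => 0]).
(* K_0 = -3H + E_1 + ... + E_n = -3 H - sum (-1) E_i *)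
Definition K0 n : cls n := (-3, [ffun _ => -1]).

Definition ind n (A : cls n) : int := dot A A - dot (K0 n) A.

Definition U5 n (k : nat) (A : cls n) : Prop :=
  ((2 * k)%:Z <= ind A) /\ (0 < dot A (clsH n)).

(* A cohomology class x0 PD(H) - sum x_i PD(E_i) is (x0, x), x : 'I_n -> R. *)
Definition reduced_cone (R : realType) n (x0 : R) (x : 'I_n -> R) : Prop :=
  if n == 1%N then (forall i, 0 < x i) /\ (forall i, x i < x0)
  else if n == 2%N then
    (forall i, 0 < x i) /\ (forall i j : 'I_n, (i <= j)%N -> x j <= x i) /\
    \sum_(i < n) x i < x0
  else
    (forall i, 0 < x i) /\ (forall i j : 'I_n, (i <= j)%N -> x j <= x i) /\
    \sum_(i < n | (i < 3)%N) x i <= x0 /\ \sum_(i < n) x i ^+ 2 < x0 ^+ 2.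

Definition omega_eval (R : realType) n (x0 : R) (x : 'I_n -> R) (A : cls n) : R :=
  x0 * A.1%:~R - \sum_(i < n) x i * (A.2 i)%:~R.

Definition c1_nef_cone (R : realType) n (x0 : R) (x : 'I_n -> R) : Prop :=
  reduced_cone x0 x /\ 0 < omega_eval x0 x (3, [ffun _ => 1]).

Definition cls_ge (R : realType) n (A B : cls n) : Prop :=
  forall (x0 : R) (x : 'I_n -> R), c1_nef_cone x0 x ->
    omega_eval x0 x B <= omega_eval x0 x A.

From HB Require Import structures.
From mathcomp Require Import all_boot all_order all_algebra.
From mathcomp Require Import reals.
From mathcomp Require Import zify ring lra.
From Stdlib Require Import Classical.
Import Order.TTheory GRing.Theory Num.Theory.
Set Implicit Arguments. Unset Strict Implicit. Unset Printing Implicit Defensive.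
Local Open Scope ring_scope.

(* The idea is to evaluate classes on one fixed symplectic class omega_c,
   the center of a small box that lies entirely inside the c_1-nef cone:
   omega_c = 8n^2 PD(H) - sum_i (2n - i) PD(E_{i+1}), with the box of radius 1/2.
   - omega_c takes integer values on H_2(X;Z), and these values are
     nonnegative on U_5 (every A in U_5 has b_i <= a + 1, from ind(A) >= 0);
     along a chain they are nonincreasing, hence eventually constant.
   - Once omega_c(A_i) = omega_c(A_{i+1}), the affine form
     omega |-> omega(A_i) - omega(A_{i+1}) vanishes at the center of the box
     and is nonnegative on the whole box, so its linear part is zero and
     A_i = A_{i+1}. *)

(* A nonincreasing sequence of integers bounded from below is eventually
   constant; otherwise it would drop below any prescribed level. *)
Lemma nonincreasing_int_stabilizes (v : nat -> int) (b : int) :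
  (forall i, v i.+1 <= v i) -> (forall i, b <= v i) ->
  exists N, forall i, (N <= i)%N -> v i = v N.
Proof.
move=> hv hb; have mono : forall i j, (i <= j)%N -> v j <= v i.
  exact: (homo_leq (r := fun a c => c <= a) (@lexx _ _)
           (fun y x z hxy hyz => le_trans hyz hxy) hv).
apply: NNPP => nostab.
have descend : forall m : nat, exists i, v i + m%:Z <= v 0%N.
  elim=> [|m [i hi]]; first by exists 0%N; rewrite addr0.
  have [j hj] : exists j, ~ ((i <= j)%N -> v j = v i).
    by apply: not_all_ex_not => stab; apply: nostab; exists i.
  have [hij hne] := imply_to_and _ _ hj.
  exists j; have : v j < v i by rewrite lt_neqAle mono // andbT; apply/eqP.
  move: hi; lia.
have [i] := descend (absz (v 0%N - b)).+1.
have := hb i; lia.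
Qed.

Lemma dot_clsH n (A : cls n) : dot A (clsH n) = A.1.
Proof. by rewrite /dot /= big1 ?subr0 ?mulr1 // => i _; rewrite ffunE mulr0. Qed.

Lemma ind_expand n (A : cls n) :
  ind A = A.1 * A.1 + 3 * A.1 - \sum_(i < n) (A.2 i * A.2 i + A.2 i).
Proof.
rewrite /ind /dot /K0 /= big_split /=.
under [X in _ - (_ - X)]eq_bigr do rewrite ffunE mulN1r.
by rewrite sumrN; ring.
Qed.

(* Since b^2 + b >= 0 on integers, ind(A) >= 0 forces
   b_j^2 + b_j <= a^2 + 3a < (a + 2)^2 + (a + 2), i.e. b_j <= a + 1. *)
Lemma exceptional_coeff_le n (A : cls n) (j : 'I_n) :
  0 <= ind A -> 0 < A.1 -> A.2 j <= A.1 + 1.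
Proof.
rewrite ind_expand => hind ha.
have hj : A.2 j * A.2 j + A.2 j <= \sum_(i < n) (A.2 i * A.2 i + A.2 i).
  by rewrite (bigD1 j) //= lerDl sumr_ge0 // => i _; nia.
nia.
Qed.

Definition center_x0 (R : realType) n : R := (8 * n * n)%N%:R.
Definition center_x (R : realType) n (i : 'I_n) : R := (2 * n - i)%N%:R.

Definition center_value n (A : cls n) : int :=
  (8 * n * n)%N%:Z * A.1 - \sum_(i < n) (2 * n - i)%N%:Z * A.2 i.

Lemma omega_center (R : realType) n (A : cls n) :
  omega_eval (center_x0 R n) (@center_x R n) A = (center_value A)%:~R.
Proof.
rewrite /omega_eval /center_value rmorphB /= rmorph_sum /= intrM.
by congr (_ - _); apply: eq_bigr => i _; rewrite intrM.
Qed.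

(* omega_c is nonnegative on classes with ind >= 0 and positive degree:
   sum_i (2n - i) b_i <= 2n^2 (a + 1) <= 8n^2 a. *)
Lemma center_value_ge0 n (A : cls n) :
  0 <= ind A -> 0 < A.1 -> 0 <= center_value A.
Proof.
move=> hind ha; rewrite /center_value.
have : \sum_(i < n) (2 * n - i)%N%:Z * A.2 i <= \sum_(i < n) (2 * n)%N%:Z * (A.1 + 1).
  apply: ler_sum => i _; have := exceptional_coeff_le i hind ha.
  have := ltn_ord i; nia.
rewrite sumr_const card_ord -mulr_natr; nia.
Qed.

(* Then sum x_i < x0 and
   sum x_i^2 <= n M^2 <= (n M)^2 < x0^2, which covers every case of P. *)
Lemma c1_nef_cone_of_dominated (R : realType) n (x0 M : R) (x : 'I_n -> R) :
  (forall i, 0 < x i) -> (forall i, x i <= M) ->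
  (forall i j : 'I_n, (i <= j)%N -> x j <= x i) -> M *+ n < x0 ->
  c1_nef_cone x0 x.
Proof.
move=> xpos xle xdecr hx0.
have sum_le : \sum_(i < n) x i <= M *+ n.
  by rewrite (le_trans (ler_sum _ (fun i _ => xle i))) // sumr_const card_ord.
have sum_ge0 : 0 <= \sum_(i < n) x i by rewrite sumr_ge0 // => i _; apply: ltW.
have sum3_le : \sum_(i < n | (i < 3)%N) x i <= \sum_(i < n) x i.
  rewrite [X in _ <= X](bigID (fun i : 'I_n => (i < 3)%N)) /= lerDl.
  by rewrite sumr_ge0 // => i _; apply: ltW.
have sqsum_lt : \sum_(i < n) x i ^+ 2 < x0 ^+ 2.
  apply: (@le_lt_trans _ _ ((M *+ n) ^+ 2)); last first.
    have : 0 <= M *+ n by apply: le_trans sum_le.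
    by rewrite !expr2; nra.
  apply: (@le_trans _ _ (\sum_(i < n) M ^+ 2)).
    by apply: ler_sum => i _; have := xle i; have := xpos i; rewrite !expr2; nra.
  rewrite sumr_const card_ord exprMn_n ler_wpMn2l ?sqr_ge0 //.
  by rewrite -mulnn; nia.
have x_lt i : x i < x0.
  apply: le_lt_trans hx0; apply: le_trans sum_le.
  by rewrite (bigD1 i) //= lerDl sumr_ge0 // => j _; apply: ltW.
split.
  rewrite /reduced_cone; case: ifP => _; first by split.
  by case: ifP => _; do !split => //; lra.
rewrite /omega_eval /=; under eq_bigr do rewrite ffunE mulr1.
lra.
Qed.

Definition in_box (R : realType) n (r x0 : R) (x : 'I_n -> R) (y0 : R) (y : 'I_n -> R) :=
  `|y0 - x0| <= r /\ forall i, `|y i - x i| <= r.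

(* The box of radius 1/2 around omega_c lies in the c_1-nef cone: there
   the x_i stay in [1/2, 2n + 1/2], keep their order (the center coordinates
   differ by at least 1), and n (2n + 1/2) < 8n^2 - 1/2. *)
Lemma center_box_in_cone (R : realType) n (y0 : R) (y : 'I_n -> R) :
  (0 < n)%N -> in_box (1/2) (center_x0 R n) (@center_x R n) y0 y ->
  c1_nef_cone y0 y.
Proof.
rewrite /in_box ler_distl => hn [/andP [hy0l hy0r] hy].
have {}hy i : center_x R i - 1/2 <= y i <= center_x R i + 1/2 by rewrite -ler_distl.
have x_ge1 (i : 'I_n) : 1 <= center_x R i.
  by rewrite /center_x ler1n; have := ltn_ord i; lia.
have x_le (i : 'I_n) : center_x R i <= (2 * n)%N%:R.
  by rewrite /center_x ler_nat; lia.
have x_gap (i j : 'I_n) : (i < j)%N -> center_x R j + 1 <= center_x R i.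
  by move=> hij; rewrite /center_x natr1 ler_nat; have := ltn_ord j; lia.
apply: (@c1_nef_cone_of_dominated _ _ _ ((2 * n)%N%:R + 1/2)).
- by move=> i; have := x_ge1 i; move: (hy i) => /andP[]; lra.
- by move=> i; have := x_le i; move: (hy i) => /andP[]; lra.
- move=> i j; rewrite leq_eqVlt => /orP [/eqP/val_inj -> // | hij].
  by have := x_gap _ _ hij; move: (hy i) (hy j) => /andP[? ?] /andP[? ?]; lra.
have hN : 1 <= n%:R :> R by rewrite ler1n.
move: hy0l; rewrite /center_x0 -mulr_natr !natrM.
nra.
Qed.

Lemma omega_eval_shift (R : realType) n (x0 t : R) (x e : 'I_n -> R) (A : cls n) :
  omega_eval (x0 + t) (fun i => x i + e i) A =
  omega_eval x0 x A + (t * A.1%:~R - \sum_(i < n) e i * (A.2 i)%:~R).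
Proof.
rewrite /omega_eval; under eq_bigr do rewrite mulrDl.
by rewrite big_split /=; ring.
Qed.

(* A linear form that is nonnegative on a symmetric box is zero: test it
   on the points +-r and +-r e_j of the coordinate axes. *)
Lemma linear_form_nonneg_on_box (R : realType) n (r c : R) (d : 'I_n -> R) :
  0 < r ->
  (forall t (e : 'I_n -> R), `|t| <= r -> (forall i, `|e i| <= r) ->
     0 <= t * c + \sum_(i < n) e i * d i) ->
  c = 0 /\ forall i, d i = 0.
Proof.
move=> r_gt0 hform.
have sym_nonneg (a : R) : 0 <= r * a -> 0 <= - r * a -> a = 0.
  rewrite mulNr oppr_ge0 !pmulr_rge0 ?pmulr_rle0 // => h1 h2.
  by apply/le_anti/andP.
have rle : `|r| <= r by rewrite ger0_norm ?(ltW r_gt0).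
have nrle : `|- r| <= r by rewrite normrN.
have zle : `|0 : R| <= r by rewrite normr0 ltW.
split.
  have along_t (t : R) : `|t| <= r -> 0 <= t * c.
    move=> ht; have := hform t (fun=> 0) ht (fun=> zle).
    by rewrite big1 ?addr0 // => i _; rewrite mul0r.
  by apply: sym_nonneg; apply: along_t.
move=> j; pose dir (s : R) := fun i : 'I_n => if i == j then s else 0.
have along_j (s : R) : `|s| <= r -> 0 <= s * d j.
  move=> hs; have dir_le i : `|dir s i| <= r by rewrite /dir; case: eqP.
  have := hform 0 (dir s) zle dir_le; rewrite mul0r add0r (bigD1 j) //= /dir eqxx.
  by rewrite big1 ?addr0 // => i /negbTE ->; rewrite mul0r.
by apply: sym_nonneg; apply: along_j.
Qed.

Lemma cls_eq_of_box_ge (R : realType) n (r x0 : R) (x : 'I_n -> R) (A B : cls n) :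
  0 < r -> omega_eval x0 x A = omega_eval x0 x B ->
  (forall y0 y, in_box r x0 x y0 y -> omega_eval y0 y B <= omega_eval y0 y A) ->
  A = B.
Proof.
move=> r_gt0 hAB hbox.
have [hc hd] : (A.1 - B.1)%:~R = 0 :> R /\ forall i, (B.2 i - A.2 i)%:~R = 0 :> R.
  apply: (linear_form_nonneg_on_box r_gt0) => t e ht he.
  have : in_box r x0 x (x0 + t) (fun i => x i + e i).
    by split=> [|i]; rewrite addrAC subrr add0r.
  move=> /hbox; rewrite !omega_eval_shift hAB lerD2l -subr_ge0 => hle.
  rewrite intrB mulrBr; under eq_bigr do rewrite intrB mulrBr.
  by rewrite sumrB; lra.
case: A B {hAB hbox} hc hd => [a b] [a' b'] /= /eqP; rewrite intr_eq0 subr_eq0 => /eqP -> hd.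
congr (_, _); apply/ffunP => i; have /eqP := hd i.
by rewrite intr_eq0 subr_eq0 => /eqP.
Qed.

Theorem lemma4p3 (R : realType) (n : nat) (hn : (0 < n)%N) (k : nat) (hk : (0 < k)%N)
  (A : nat -> cls n) :
  (forall i, U5 k (A i)) ->
  (forall i, cls_ge R (A i) (A i.+1)) ->
  exists N : nat, forall i, (N <= i)%N -> A i = A N.
Proof.
move=> hU hge.
have hbox i y0 y : in_box (1/2) (center_x0 R n) (@center_x R n) y0 y ->
    omega_eval y0 y (A i.+1) <= omega_eval y0 y (A i).
  by move=> /(center_box_in_cone hn); apply: hge.
have center_in : in_box (1/2) (center_x0 R n) (@center_x R n) (center_x0 R n) (@center_x R n).
  by split=> [|i]; rewrite subrr normr0; lra.
have value_decr i : center_value (A i.+1) <= center_value (A i).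
  by rewrite -(ler_int R) -!omega_center; apply: hbox.
have value_ge0 i : 0 <= center_value (A i).
  have [hind hdeg] := hU i; rewrite dot_clsH in hdeg.
  by apply: center_value_ge0 => //; apply: le_trans hind.
have [N stab] := nonincreasing_int_stabilizes value_decr value_ge0.
have step i : (N <= i)%N -> A i.+1 = A i.
  move=> hi; symmetry; apply: (cls_eq_of_box_ge _ _ (hbox i)); first by rewrite divr_gt0.
  by rewrite !omega_center (stab i hi) (stab i.+1 (leqW hi)).
exists N; elim=> [|i IH]; first by rewrite leqn0 => /eqP ->.
rewrite leq_eqVlt => /orP [/eqP <- // | hi].
by rewrite step // IH.
Qed.
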